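(* Let $\mathbf{u}$ be a quasi-definite linear functional with SMOP $(P_n)_{n\ge0}$ and associated polynomials of the first kind $(P^{(1)}_n)_{n\ge0}$, let $c\in\mathbb{C}$, and let $\widehat{\mathbf{u}}$ be a linear functional with $\mathbf{u}=(x-c)^2\widehat{\mathbf{u}}$. Put $S_n(x)=(\widehat{\mathbf{u}}_1-c\widehat{\mathbf{u}}_0)P_n(x)+\mathbf{u}_0P^{(1)}_{n-1}(x)$ for $n\ge0$ and, for $n\ge2$, $$d_n^*=\det\begin{pmatrix}S_{n-2}(c)&S_{n-1}(c)\\ S_{n-2}'(c)+\widehat{\mathbf{u}}_0P_{n-2}(c)&S_{n-1}'(c)+\widehat{\mathbf{u}}_0P_{n-1}(c)\end{pmatrix}.$$ Then $\widehat{\mathbf{u}}$ is quasi-definite if and only if $\widehat{\mathbf{u}}_0\neq0$ and $d_n^*\neq0$ for all $n\ge2$. In that case its SMOP $(Q_n)_{n\ge0}$ is given by $Q_0=1$, $Q_1(x)=x-\widehat{\mathbf{u}}_1/\widehat{\mathbf{u}}_0$, and for $n\ge2$ $$Q_n(x)=\frac{1}{d_n^*}\det\begin{pmatrix}P_n(x)&P_{n-1}(x)&P_{n-2}(x)\\ S_n'(c)+\widehat{\mathbf{u}}_0P_n(c)&S_{n-1}'(c)+\widehat{\mathbf{u}}_0P_{n-1}(c)&S_{n-2}'(c)+\widehat{\mathbf{u}}_0P_{n-2}(c)\\ S_n(c)&S_{n-1}(c)&S_{n-2}(c)\end{pmatrix}.$$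
   Context: Linear functionals on the complex polynomials $\mathbb{P}$, moments $\mathbf{u}_n=\langle\mathbf{u},x^n\rangle$, $\langle(x-c)^2\widehat{\mathbf{u}},p\rangle=\langle\widehat{\mathbf{u}},(x-c)^2p\rangle$. A functional is quasi-definite if all leading principal submatrices of its Hankel moment matrix $(\mathbf{u}_{i+j})_{i,j\ge0}$ are nonsingular; it then has a unique sequence of monic orthogonal polynomials (SMOP) $(P_n)$, $\deg P_n=n$, $\langle\mathbf{u},P_nP_m\rangle=K_n\delta_{nm}$, $K_n\ne0$, with recurrence $xP_n=P_{n+1}+b_nP_n+a_nP_{n-1}$, $P_{-1}=0,P_0=1$, $a_n\neq0$. The associated polynomials of the first kind are the monic polynomials with $xP^{(1)}_n=P^{(1)}_{n+1}+b_{n+1}P^{(1)}_n+a_{n+1}P^{(1)}_{n-1}$, $P^{(1)}_{-1}=0$, $P^{(1)}_0=1$. *)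

From HB Require Import structures.
From mathcomp Require Import all_boot all_order all_algebra.
From mathcomp Require Import complex reals.
Set Implicit Arguments. Unset Strict Implicit. Unset Printing Implicit Defensive.
Import Order.TTheory GRing.Theory Num.Theory.
Local Open Scope ring_scope.

Section Defs.
Variable C : fieldType.

(* A linear functional on C[x] is encoded by its moment sequence u : nat -> C;
   its action on p is <u, p> = \sum_i p_i u_i. *)
Definition act (u : nat -> C) (p : {poly C}) : C :=
  \sum_(i < size p) p`_i * u i.

Definition hankel (u : nat -> C) (n : nat) : 'M[C]_n :=
  \matrix_(i < n, j < n) u (i + j)%N.

Definition quasi_definite (u : nat -> C) : Prop :=
  forall n : nat, \det (hankel u n.+1) != 0.

Definition is_SMOP (u : nat -> C) (P : nat -> {poly C}) : Prop :=
  [/\ forall n, P n \is monic,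
      forall n, size (P n) = n.+1,
      forall n m, n <> m -> act u (P n * P m) = 0
    & forall n, act u (P n * P n) != 0].

Definition TTRR (P : nat -> {poly C}) (a b : nat -> C) : Prop :=
  'X * P 0%N = P 1%N + b 0%N *: P 0%N /\
  forall n, 'X * P n.+1 = P n.+2 + b n.+1 *: P n.+1 + a n.+1 *: P n.

Definition assoc_first_kind (a b : nat -> C) (P1 : nat -> {poly C}) : Prop :=
  [/\ P1 0%N = 1,
      'X * P1 0%N = P1 1%N + b 1%N *: P1 0%N
    & forall n, 'X * P1 n.+1 = P1 n.+2 + b n.+2 *: P1 n.+1 + a n.+2 *: P1 n].

(* P^{(1)}_{n-1}, with P^{(1)}_{-1} = 0 *)
Definition P1m (P1 : nat -> {poly C}) (n : nat) : {poly C} :=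
  if n is n'.+1 then P1 n' else 0.

Definition Sn (u uh : nat -> C) (c : C) (P P1 : nat -> {poly C}) (n : nat) :=
  (uh 1%N - c * uh 0%N) *: P n + u 0%N *: P1m P1 n.

Definition Tn (u uh : nat -> C) (c : C) (P P1 : nat -> {poly C}) (n : nat) : C :=
  (Sn u uh c P P1 n)^`().[c] + uh 0%N * (P n).[c].

Definition mx2 (R : nzRingType) (rows : seq (seq R)) : 'M[R]_2 :=
  \matrix_(i < 2, j < 2) nth 0 (nth [::] rows i) j.
Definition mx3 (R : nzRingType) (rows : seq (seq R)) : 'M[R]_3 :=
  \matrix_(i < 3, j < 3) nth 0 (nth [::] rows i) j.

Definition dstar (u uh : nat -> C) (c : C) (P P1 : nat -> {poly C}) (n : nat) : C :=
  let S k := (Sn u uh c P P1 k).[c] in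
  let T k := Tn u uh c P P1 k in
  \det (mx2 [:: [:: S (n-2)%N; S (n-1)%N]; [:: T (n-2)%N; T (n-1)%N]]).

Definition Qdet (u uh : nat -> C) (c : C) (P P1 : nat -> {poly C}) (n : nat)
  : {poly C} :=
  let S k := (Sn u uh c P P1 k).[c] in
  let T k := Tn u uh c P P1 k in
  \det (mx3 [:: [:: P n; P (n-1)%N; P (n-2)%N];
               [:: (T n)%:P; (T (n-1)%N)%:P; (T (n-2)%N)%:P];
               [:: (S n)%:P; (S (n-1)%N)%:P; (S (n-2)%N)%:P]]).
End Defs.

From HB Require Import structures.
From mathcomp Require Import all_boot all_order all_algebra.
From mathcomp Require Import complex reals.
From mathcomp Require Import ring zify.
Set Implicit Arguments. Unset Strict Implicit. Unset Printing Implicit Defensive.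
Import Order.TTheory GRing.Theory Num.Theory.
Local Open Scope ring_scope.

(* Write  sigma k = <uh, (x - c) P_k>  and  tau k = <uh, P_k>.
   1. det H_n(w) = 0 iff some nonzero p with deg p < n is w-orthogonal to all
      polynomials of degree < n (a kernel vector of the Hankel matrix).
   2. Dividing a test polynomial twice by x - c shows: p is uh-orthogonal to
      degree < m + 2 iff p is u-orthogonal to degree < m and both
      <uh, p> and <uh, (x - c) p> vanish.
   3. Consequently the uh-orthogonal polynomials of degree <= m + 1 are the
      al P_{m+1} + be P_m with (al, be) in the kernel of the 2x2 matrix
      [[sigma (m+1), sigma m]; [tau (m+1), tau m]], so H_{m+2}(uh) is singular
      iff that matrix is.
   4. sigma, tau and S_k(c), S_k'(c) + uh_0 P_k(c) obey the same recurrences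
      (inherited from the three-term recurrence of P) with the same initial
      values, so the 2x2 determinant is d*_{m+2}; with H_1(uh) = uh_0 this is
      the criterion. The 3x3 determinant, divided by d*_n, is monic of degree n
      and satisfies the conditions of step 2, so it is Q_n by uniqueness. *)

Lemma det_mx2E (R : comNzRingType) (a b c d : R) :
  \det (mx2 [:: [:: a; b]; [:: c; d]]) = a * d - b * c.
Proof.
rewrite (expand_det_row _ ord0) !big_ord_recl big_ord0 /cofactor !det_mx11.
rewrite /mx2 !mxE /= /bump /= ?add0n ?addn0 ?expr0 ?expr1; ring.
Qed.

Lemma det_mx3E (R : comNzRingType) (a b c d e f g h i : R) :
  \det (mx3 [:: [:: a; b; c]; [:: d; e; f]; [:: g; h; i]]) =
  a * (e * i - f * h) - b * (d * i - f * g) + c * (d * h - e * g).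
Proof.
rewrite (expand_det_row _ ord0) !big_ord_recl big_ord0 /cofactor.
rewrite !(expand_det_row _ ord0) !big_ord_recl big_ord0 /cofactor !det_mx11.
rewrite /mx3 !mxE /= /bump /= ?add0n ?addn0 ?expr0 ?expr1 ?exprS ?big_ord0.
ring.
Qed.

Lemma nat_ind2 (Pr : nat -> Prop) :
  Pr 0%N -> Pr 1%N -> (forall n, Pr n -> Pr n.+1 -> Pr n.+2) -> forall n, Pr n.
Proof.
move=> H0 H1 HS n; suff: Pr n /\ Pr n.+1 by case.
by elim: n => [|n [Hn Hn1]]; split => //; apply: HS.
Qed.

Lemma singular2P (C : fieldType) (s1 s0 t1 t0 : C) :
  (exists al be : C,
     [/\ (al != 0) || (be != 0), al * s1 + be * s0 = 0 & al * t1 + be * t0 = 0])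
  <-> s0 * t1 - s1 * t0 = 0.
Proof.
split.
  move=> [al [be [Hn Es Et]]]; apply/eqP; apply: contraLR Hn => Hd.
  (* Cramer's rule: each unknown times the determinant is a combination of
     the two equations. *)
  have Eal : al * (s0 * t1 - s1 * t0) =
    s0 * (al * t1 + be * t0) - t0 * (al * s1 + be * s0) by ring.
  have Ebe : be * (s0 * t1 - s1 * t0) =
    t1 * (al * s1 + be * s0) - s1 * (al * t1 + be * t0) by ring.
  rewrite Es Et !mulr0 subrr in Eal Ebe.
  move/eqP: Eal; rewrite mulf_eq0 (negbTE Hd) orbF => ->.
  by move/eqP: Ebe; rewrite mulf_eq0 (negbTE Hd) orbF => ->.
move=> Hd; have [Hs|] := boolP ((s0 != 0) || (s1 != 0)).
  exists s0, (- s1); split; [by rewrite oppr_eq0 | ring | by rewrite -Hd; ring].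
rewrite negb_or !negbK => /andP [/eqP -> /eqP ->].
have [Ht|] := boolP ((t0 != 0) || (t1 != 0)).
  by exists t0, (- t1); split; [rewrite oppr_eq0 | ring | ring].
rewrite negb_or !negbK => /andP [/eqP -> /eqP ->].
by exists 1, 0; split; [rewrite oner_eq0 | ring | ring].
Qed.

Section Functional.
Variable C : fieldType.
Implicit Types (w : nat -> C) (p q : {poly C}).

Lemma actE w p N : (size p <= N)%N -> act w p = \sum_(i < N) p`_i * w i.
Proof.
move=> HN; rewrite /act (big_ord_widen _ (fun i => p`_i * w i) HN) big_mkcond /=.
apply: eq_bigr => i _; case: ifP => // /negbT; rewrite -leqNgt => Hi.
by rewrite nth_default // mul0r.
Qed.

Lemma act0 w : act w 0 = 0.
Proof. by rewrite /act size_poly0 big_ord0. Qed.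

Lemma actD w p q : act w (p + q) = act w p + act w q.
Proof.
set N := maxn (size p) (size q).
rewrite (actE w (size_polyD p q)) (@actE w p N) ?leq_maxl // (@actE w q N) ?leq_maxr //.
by rewrite -big_split /=; apply: eq_bigr => i _; rewrite coefD mulrDl.
Qed.

Lemma actZ w a p : act w (a *: p) = a * act w p.
Proof.
rewrite (actE w (size_scale_leq a p)) /act mulr_sumr.
by apply: eq_bigr => i _; rewrite coefZ mulrA.
Qed.

Lemma actN w p : act w (- p) = - act w p.
Proof. by rewrite -scaleN1r actZ mulN1r. Qed.

Lemma actB w p q : act w (p - q) = act w p - act w q.
Proof. by rewrite actD actN. Qed.

Lemma act_sum w (I : Type) (r : seq I) (Pr : pred I) (F : I -> {poly C}) :
  act w (\sum_(i <- r | Pr i) F i) = \sum_(i <- r | Pr i) act w (F i).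
Proof. exact: (big_morph (act w) (actD w) (act0 w)). Qed.

Lemma actXn w k : act w 'X^k = w k.
Proof.
rewrite /act size_polyXn big_ord_recr /= big1 ?add0r.
  by rewrite coefXn eqxx mul1r.
by move=> i _; rewrite coefXn (ltn_eqF (ltn_ord i)) mul0r.
Qed.

Lemma act1 w : act w 1 = w 0%N.
Proof. by rewrite -(actXn w 0) expr0. Qed.

Lemma actX w : act w 'X = w 1%N.
Proof. by rewrite -(actXn w 1) expr1. Qed.

Lemma actC w k : act w k%:P = k * w 0%N.
Proof. by rewrite -alg_polyC actZ act1. Qed.

Lemma poly_expand p N : (size p <= N)%N -> p = \sum_(i < N) p`_i *: 'X^i.
Proof.
move=> HN; rewrite -poly_def; apply/polyP => i; rewrite coef_poly.
case: ifP => // /negbT; rewrite -leqNgt => Hi.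
by rewrite nth_default // (leq_trans HN Hi).
Qed.

(* <w, p x^j> is a row of the Hankel matrix applied to the coefficients of p. *)
Lemma act_mulXn w p j N : (size p <= N)%N ->
  act w (p * 'X^j) = \sum_(i < N) p`_i * w (i + j)%N.
Proof.
move=> HN; rewrite {1}(poly_expand HN) mulr_suml act_sum.
by apply: eq_bigr => i _; rewrite -scalerAl -exprD actZ actXn.
Qed.

Definition ortho w n p := forall q, (size q <= n)%N -> act w (p * q) = 0.

Lemma orthoP w n p : (forall j, (j < n)%N -> act w (p * 'X^j) = 0) -> ortho w n p.
Proof.
move=> H q Hq; rewrite (poly_expand Hq) mulr_sumr act_sum big1 // => j _.
by rewrite -scalerAr actZ H ?mulr0 // (leq_trans (ltn_ord j) Hq).
Qed.

Lemma orthoD w n p q : ortho w n p -> ortho w n q -> ortho w n (p + q).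
Proof. by move=> Hp Hq r Hr; rewrite mulrDl actD Hp ?Hq ?addr0. Qed.

Lemma orthoZ w n a p : ortho w n p -> ortho w n (a *: p).
Proof. by move=> Hp r Hr; rewrite -scalerAl actZ Hp ?mulr0. Qed.

Lemma orthoN w n p : ortho w n p -> ortho w n (- p).
Proof. by move=> Hp; rewrite -scaleN1r; apply: orthoZ. Qed.

Lemma ortho_le w n m p : (m <= n)%N -> ortho w n p -> ortho w m p.
Proof. by move=> Hmn Hp q Hq; apply: Hp; apply: leq_trans Hmn. Qed.

Lemma hankel0P w n :
  \det (hankel w n) = 0 <-> exists2 p : {poly C}, p != 0 & (size p <= n)%N /\ ortho w n p.
Proof.
split.
  case: n => [|n]; first by move/eqP; rewrite det_mx00 oner_eq0.
  move/eqP/det0P => [v vn0 Hv]; exists (\poly_(i < n.+1) v 0 (inord i)).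
    apply: contra vn0 => /eqP H; apply/eqP/rowP => i.
    by move/polyP: H => /(_ i); rewrite coef_poly ltn_ord inord_val !mxE coef0.
  split; first exact: size_poly.
  apply: orthoP => j Hj; rewrite (act_mulXn _ _ (size_poly _ _)).
  transitivity ((v *m hankel w n.+1) 0 (Ordinal Hj)); last by rewrite Hv mxE.
  by rewrite !mxE; apply: eq_bigr => i _; rewrite coef_poly ltn_ord inord_val !mxE.
move=> [p pn0 [Hs Ho]]; apply/eqP/det0P; exists (\row_(i < n) p`_i).
  apply: contra pn0 => /eqP H; apply/eqP/polyP => i; rewrite coef0.
  case: (ltnP i n) => Hi; last by rewrite nth_default // (leq_trans Hs Hi).
  by move/rowP: H => /(_ (Ordinal Hi)); rewrite !mxE.
apply/rowP => j; rewrite !mxE.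
transitivity (act w (p * 'X^j)); last by apply: Ho; rewrite size_polyXn ltn_ord.
by rewrite (act_mulXn _ _ Hs); apply: eq_bigr => i _; rewrite !mxE.
Qed.

Lemma hankel1 w : \det (hankel w 1) = w 0%N.
Proof. by rewrite det_mx11 mxE. Qed.

Lemma quasi_definite_nondeg w n p : quasi_definite w ->
  (size p <= n)%N -> ortho w n p -> p = 0.
Proof.
case: n => [|n] Hw Hs Ho; first by move: Hs; rewrite leqn0 size_poly_eq0 => /eqP.
apply/eqP; apply: contraLR (Hw n) => pn0; rewrite negbK.
by apply/eqP/hankel0P; exists p.
Qed.

End Functional.

Section MonicBasis.
Variable C : fieldType.
Variable B : nat -> {poly C}.
Hypothesis Bm : forall k, B k \is monic.
Hypothesis Bs : forall k, size (B k) = k.+1.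

Lemma B_coef k : (B k)`_k = 1.
Proof. by have := monicP (Bm k); rewrite lead_coefE Bs. Qed.

Lemma B_coef_hi k j : (k < j)%N -> (B k)`_j = 0.
Proof. by move=> H; rewrite nth_default // Bs. Qed.

Lemma decomp m (q : {poly C}) : (size q <= m.+1)%N ->
  exists a : C, exists2 r : {poly C}, (size r <= m)%N & q = a *: B m + r.
Proof.
move=> Hq; exists q`_m, (q - q`_m *: B m); last by rewrite addrC subrK.
apply/leq_sizeP => j Hj; rewrite coefB coefZ.
case: (ltngtP m j) Hj => // [Hmj|<-] _; last by rewrite B_coef mulr1 subrr.
by rewrite B_coef_hi // mulr0 subr0; move/leq_sizeP: Hq; apply.
Qed.

Lemma span (Pr : {poly C} -> Prop) :
  Pr 0 -> (forall p q, Pr p -> Pr q -> Pr (p + q)) ->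
  (forall a p, Pr p -> Pr (a *: p)) ->
  forall m, (forall k, (k < m)%N -> Pr (B k)) ->
  forall q : {poly C}, (size q <= m)%N -> Pr q.
Proof.
move=> H0 HD HZ; elim=> [|m IH] HB q Hq.
  by move: Hq; rewrite leqn0 size_poly_eq0 => /eqP ->.
have [a [r Hr ->]] := decomp Hq.
by apply: HD; [apply: HZ; apply: HB | apply: IH => // k Hk; apply: HB; apply: ltnW].
Qed.

End MonicBasis.

Section SMOP.
Variable C : fieldType.
Implicit Types (w : nat -> C) (p : {poly C}).

Lemma size_monicB (p q : {poly C}) n : p \is monic -> q \is monic ->
  size p = n.+1 -> size q = n.+1 -> (size (p - q)%R <= n)%N.
Proof.
move=> /monicP pm /monicP qm ps qs; apply/leq_sizeP => j Hj; rewrite coefB.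
case: (ltngtP n j) Hj => // [Hnj|<-] _; first by rewrite !nth_default ?ps ?qs // subr0.
by move: pm qm; rewrite !lead_coefE ps qs /= => -> ->; rewrite subrr.
Qed.

(* Q_k is orthogonal to all polynomials of degree < k, since these are
   spanned by Q_0, ..., Q_{k-1}. *)
Lemma SMOP_ortho w Q k : is_SMOP w Q -> ortho w k (Q k).
Proof.
case=> Hm Hs Ho _.
apply: (span Hm Hs (Pr := fun q => act w (Q k * q) = 0)).
- by rewrite mulr0 act0.
- by move=> p q Hp Hq; rewrite mulrDr actD Hp Hq addr0.
- by move=> a p Hp; rewrite -scalerAr actZ Hp mulr0.
- by move=> j Hj; apply: Ho => Hkj; rewrite Hkj ltnn in Hj.
Qed.

Lemma SMOP_unique w Q n p : quasi_definite w -> is_SMOP w Q ->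
  p \is monic -> size p = n.+1 -> ortho w n p -> Q n = p.
Proof.
move=> Hw HQ pm ps Hp; have [Qm Qs _ _] := HQ.
apply/eqP; rewrite -subr_eq0; apply/eqP; apply: (quasi_definite_nondeg Hw).
  exact: size_monicB.
by apply: orthoD; [exact: SMOP_ortho | exact: orthoN].
Qed.

Lemma SMOP_low w Q : quasi_definite w -> is_SMOP w Q ->
  Q 0%N = 1 /\ Q 1%N = 'X - (w 1%N / w 0%N)%:P.
Proof.
move=> Hw HQ; have w0 : w 0%N != 0 by rewrite -hankel1; apply: Hw.
split; apply: (SMOP_unique Hw HQ).
- exact: monic1.
- exact: size_poly1.
- by move=> q; rewrite leqn0 size_poly_eq0 => /eqP ->; rewrite mulr0 act0.
- exact: monicXsubC.
- exact: size_XsubC.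
apply: orthoP => -[|//] _.
by rewrite expr0 mulr1 actB actX actC divfK // subrr.
Qed.

End SMOP.

Section Perturbation.
Variable C : fieldType.
Variables (u uh : nat -> C) (P P1 : nat -> {poly C}) (a b : nat -> C) (c : C).
Hypothesis Hu : quasi_definite u.
Hypothesis HP : is_SMOP u P.
Hypothesis HT : TTRR P a b.
Hypothesis HA : assoc_first_kind a b P1.
Hypothesis Hrel : forall p : {poly C}, act u p = act uh (('X - c%:P) ^+ 2 * p).

Let Pm : forall k, P k \is monic. Proof. by case: HP. Qed.
Let Ps : forall k, size (P k) = k.+1. Proof. by case: HP. Qed.

Lemma P0 : P 0%N = 1.
Proof. by case: (SMOP_low Hu HP). Qed.

Lemma P1E : P 1%N = 'X - (b 0%N)%:P.
Proof. by case: HT => H _; move: H; rewrite P0 mulr1 => ->; rewrite alg_polyC addrK. Qed.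

Lemma PrecE n : P n.+2 = ('X - (b n.+1)%:P) * P n.+1 - a n.+1 *: P n.
Proof. by case: HT => _ H; rewrite mulrBl H -!mul_polyC; ring. Qed.

Lemma P1mrecE n : P1m P1 n.+2 = ('X - (b n.+1)%:P) * P1m P1 n.+1 - a n.+1 *: P1m P1 n.
Proof.
case: HA => _ H1 H2; case: n => [|n] /=.
  by rewrite scaler0 subr0 mulrBl H1 mul_polyC addrK.
by rewrite mulrBl H2 -!mul_polyC; ring.
Qed.

Lemma SnrecE n : Sn u uh c P P1 n.+2 =
  ('X - (b n.+1)%:P) * Sn u uh c P P1 n.+1 - a n.+1 *: Sn u uh c P P1 n.
Proof. by rewrite /Sn PrecE P1mrecE -!mul_polyC; ring. Qed.

Lemma Portho k : ortho u k (P k).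
Proof. exact: SMOP_ortho. Qed.

Lemma comb_ortho m (al be : C) : ortho u m (al *: P m.+1 + be *: P m).
Proof.
apply: orthoD; apply: orthoZ; last exact: Portho.
by apply: (ortho_le (leqnSn m)); apply: Portho.
Qed.

Lemma comb_eq0 m (al be : C) : al *: P m.+1 + be *: P m = 0 -> al = 0 /\ be = 0.
Proof.
move=> E; have al0 : al = 0.
  move/polyP: E => /(_ m.+1); rewrite coef0 coefD !coefZ (B_coef Pm Ps).
  by rewrite (B_coef_hi Ps) // mulr0 addr0 mulr1.
split => //; move/eqP: E; rewrite al0 scale0r add0r scale_poly_eq0.
by rewrite -size_poly_eq0 Ps orbF => /eqP.
Qed.

Lemma comb_size m (al be : C) : (size (al *: P m.+1 + be *: P m)%R <= m.+2)%N.
Proof.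
rewrite (leq_trans (size_polyD _ _)) // geq_max.
by rewrite !(leq_trans (size_scale_leq _ _)) ?Ps.
Qed.

Definition sigma k := act uh (('X - c%:P) * P k).
Definition tau k := act uh (P k).

Lemma ortho_perturbed m (p : {poly C}) : ortho uh m.+2 p <->
  [/\ ortho u m p, act uh p = 0 & act uh (('X - c%:P) * p) = 0].
Proof.
split=> [Ho | [Ho H0 H1] q Hq].
  split.
  - move=> r Hr; rewrite Hrel mulrCA; apply: Ho.
    apply: (leq_trans (size_polyMleq _ _)); rewrite size_exp_XsubC /=.
    by change ((size r).+2 <= m.+2)%N; lia.
  - by rewrite -(mulr1 p); apply: Ho; rewrite size_poly1.
  - by rewrite mulrC; apply: Ho; rewrite size_XsubC.
set q1 := q %/ ('X - c%:P); set q2 := q1 %/ ('X - c%:P).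
have E1 : q = q1 * ('X - c%:P) + (q.[c])%:P.
  by rewrite {1}(divp_eq q ('X - c%:P)) modp_XsubC.
have E2 : q1 = q2 * ('X - c%:P) + (q1.[c])%:P.
  by rewrite {1}(divp_eq q1 ('X - c%:P)) modp_XsubC.
have Hs2 : (size q2 <= m)%N.
  rewrite /q2 size_divp ?polyXsubC_eq0 // size_XsubC /q1 size_divp ?polyXsubC_eq0 //.
  by rewrite size_XsubC /=; change (size q - 1 - 1 <= m)%N; lia.
have -> : p * q = ('X - c%:P) ^+ 2 * (p * q2) + q1.[c] *: (('X - c%:P) * p)
                  + q.[c] *: p.
  by rewrite {1}E1 {1}E2 -!mul_polyC; ring.
by rewrite !actD !actZ -Hrel H0 H1 Ho // !mulr0 !addr0.
Qed.

Lemma ortho_perturbed_comb m (al be : C) :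
  ortho uh m.+2 (al *: P m.+1 + be *: P m) <->
  al * sigma m.+1 + be * sigma m = 0 /\ al * tau m.+1 + be * tau m = 0.
Proof.
have Etau : act uh (al *: P m.+1 + be *: P m) = al * tau m.+1 + be * tau m.
  by rewrite actD !actZ.
have Esigma : act uh (('X - c%:P) * (al *: P m.+1 + be *: P m)) =
              al * sigma m.+1 + be * sigma m.
  by rewrite mulrDr -!scalerAr actD !actZ.
split=> [/ortho_perturbed [_ H0 H1] | [Hs Ht]]; first by rewrite -Etau -Esigma.
by apply/ortho_perturbed; split; rewrite ?Etau ?Esigma //; apply: comb_ortho.
Qed.

Lemma perturbed_span m (p : {poly C}) : (size p <= m.+2)%N -> ortho uh m.+2 p ->
  exists al be : C, p = al *: P m.+1 + be *: P m.
Proof.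
move=> Hs /ortho_perturbed [Ho _ _].
have [al [r Hr Ep]] := decomp Pm Ps Hs.
have [be [r' Hr' Er]] := decomp Pm Ps Hr.
exists al, be; suff r'0 : r' = 0 by rewrite Ep Er r'0 addr0.
apply: (quasi_definite_nondeg Hu Hr').
have -> : r' = p - (al *: P m.+1 + be *: P m) by rewrite Ep Er; ring.
by apply: orthoD => //; apply: orthoN; apply: comb_ortho.
Qed.

Lemma perturbed_degenerate m :
  (exists2 p : {poly C}, p != 0 & (size p <= m.+2)%N /\ ortho uh m.+2 p) <->
  sigma m * tau m.+1 - sigma m.+1 * tau m = 0.
Proof.
apply: iff_trans (singular2P _ _ _ _); split.
  move=> [p pn0 [Hs Ho]]; have [al [be Ep]] := perturbed_span Hs Ho.
  move: Ho; rewrite Ep => /ortho_perturbed_comb [Es Et].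
  exists al, be; split => //; move: pn0; rewrite Ep; apply: contraTT.
  by rewrite negb_or !negbK => /andP [/eqP -> /eqP ->]; rewrite !scale0r addr0 eqxx.
move=> [al [be [Hn Es Et]]]; exists (al *: P m.+1 + be *: P m).
  by apply: contraTneq Hn => /comb_eq0 [-> ->]; rewrite eqxx.
by split; [exact: comb_size | exact/ortho_perturbed_comb].
Qed.

Lemma uP_succ k : act u (P k.+1) = 0.
Proof. by rewrite -(mulr1 (P k.+1)); apply: Portho; rewrite size_poly1. Qed.

Lemma sigma_rec n : sigma n.+2 = (c - b n.+1) * sigma n.+1 - a n.+1 * sigma n.
Proof.
rewrite /sigma; have -> : ('X - c%:P) * P n.+2 =
  ('X - c%:P) ^+ 2 * P n.+1 + (c - b n.+1) *: (('X - c%:P) * P n.+1)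
  - a n.+1 *: (('X - c%:P) * P n).
  by rewrite PrecE -!mul_polyC polyCB; ring.
by rewrite actB actD !actZ -Hrel uP_succ add0r.
Qed.

Lemma tau_rec n : tau n.+2 = sigma n.+1 + (c - b n.+1) * tau n.+1 - a n.+1 * tau n.
Proof.
rewrite /tau; have -> : P n.+2 =
    ('X - c%:P) * P n.+1 + (c - b n.+1) *: P n.+1 - a n.+1 *: P n.
  by rewrite PrecE -!mul_polyC polyCB; ring.
by rewrite actB actD !actZ.
Qed.

Lemma sigmaE k : sigma k = (Sn u uh c P P1 k).[c].
Proof.
have HA0 : P1 0%N = 1 by case: HA.
elim/nat_ind2: k => [||n IH0 IH1].
- by rewrite /sigma /Sn P0 mulr1 actB actX actC /= !hornerE; ring.
- rewrite /sigma; have -> : ('X - c%:P) * P 1%N =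
      ('X - c%:P) ^+ 2 * 1 + (c - b 0%N) *: ('X - c%:P).
    by rewrite P1E -!mul_polyC polyCB; ring.
  by rewrite actD actZ -Hrel act1 actB actX actC /Sn /= P1E HA0 !hornerE; ring.
- by rewrite sigma_rec IH0 IH1 SnrecE !hornerE.
Qed.

Lemma tauE k : tau k = Tn u uh c P P1 k.
Proof.
have HA0 : P1 0%N = 1 by case: HA.
rewrite /Tn; elim/nat_ind2: k => [||n IH0 IH1].
- by rewrite /tau /Sn P0 act1 /= !derivE !hornerE; ring.
- by rewrite /tau /Sn /= P1E HA0 actB actX actC !derivE !hornerE; ring.
- by rewrite tau_rec sigmaE IH0 IH1 SnrecE PrecE !derivE !hornerE; ring.
Qed.

Lemma dstarE m : dstar u uh c P P1 m.+2 = sigma m * tau m.+1 - sigma m.+1 * tau m.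
Proof. by rewrite /dstar /= !subSS !subn0 det_mx2E -!sigmaE -!tauE. Qed.

Lemma QdetE m : Qdet u uh c P P1 m.+2 =
    (sigma m * tau m.+1 - sigma m.+1 * tau m) *: P m.+2
  + (sigma m.+2 * tau m - sigma m * tau m.+2) *: P m.+1
  + (sigma m.+1 * tau m.+2 - sigma m.+2 * tau m.+1) *: P m.
Proof.
rewrite /Qdet /= !subSS !subn0 det_mx3E -!sigmaE -!tauE.
by rewrite -!mul_polyC !(polyCB, polyCM); ring.
Qed.

Lemma quasi_definite_perturbedP : quasi_definite uh <->
  (uh 0%N != 0 /\ forall n : nat, (2 <= n)%N -> dstar u uh c P P1 n != 0).
Proof.
split.
  move=> Hq; split; first by rewrite -hankel1; apply: Hq.
  case=> [|[|m]] // _; rewrite dstarE; apply/eqP => /perturbed_degenerate Hd.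
  by move/eqP: (Hq m.+1); apply; apply/hankel0P.
case=> H0 Hd [|m]; first by rewrite hankel1.
apply/eqP => /hankel0P /perturbed_degenerate; apply/eqP.
by rewrite -dstarE; apply: Hd.
Qed.

Lemma Q_high m (Q : nat -> {poly C}) : quasi_definite uh -> is_SMOP uh Q ->
  Q m.+2 = (dstar u uh c P P1 m.+2)^-1 *: Qdet u uh c P P1 m.+2.
Proof.
move=> Hq HQ; have := proj2 (proj1 quasi_definite_perturbedP Hq) m.+2 isT.
rewrite QdetE dstarE.
set d := _ - sigma m.+1 * tau m; set e := _ - sigma m * tau m.+2.
set f := _ - sigma m.+2 * tau m.+1 => dn0.
have Hortho : ortho uh m.+2 (d *: P m.+2 + e *: P m.+1 + f *: P m).
{ apply/ortho_perturbed; split; last first.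
  - by rewrite !mulrDr -!scalerAr !actD !actZ /d /e /f /sigma; ring.
  - by rewrite !actD !actZ /d /e /f /tau; ring.
  apply: orthoD; first apply: orthoD.
  all: by apply: orthoZ; apply: ortho_le; last exact: Portho; lia. }
have Ep : d^-1 *: (d *: P m.+2 + e *: P m.+1 + f *: P m) =
          P m.+2 + d^-1 *: (e *: P m.+1 + f *: P m).
  by rewrite -addrA scalerDr scalerA mulVf // scale1r.
have Hlow : (size (d^-1 *: (e *: P m.+1 + f *: P m)) < size (P m.+2))%N.
  by rewrite Ps ltnS (leq_trans (size_scale_leq _ _)) // comb_size.
apply: (SMOP_unique Hq HQ); last exact: orthoZ.
- by rewrite Ep; apply/monicP; rewrite lead_coefDl //; apply/monicP.
- by rewrite Ep size_polyDl // Ps.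
Qed.

End Perturbation.

Local Open Scope complex_scope.

Theorem mainTheorem3 (R : realType) (u uh : nat -> R[i])
  (P P1 : nat -> {poly R[i]}) (a b : nat -> R[i]) (c : R[i]) :
  quasi_definite u ->
  is_SMOP u P ->
  TTRR P a b ->
  assoc_first_kind a b P1 ->
  (forall p : {poly R[i]}, act u p = act uh (('X - c%:P) ^+ 2 * p)) ->
  (quasi_definite uh <->
     (uh 0%N != 0 /\ forall n : nat, (2 <= n)%N -> dstar u uh c P P1 n != 0))
  /\
  (quasi_definite uh ->
   forall Q : nat -> {poly R[i]}, is_SMOP uh Q ->
     [/\ Q 0%N = 1,
         Q 1%N = 'X - (uh 1%N / uh 0%N)%:P
       & forall n : nat, (2 <= n)%N ->
           Q n = (dstar u uh c P P1 n)^-1 *: Qdet u uh c P P1 n]).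
Proof.
move=> Hu HP HT HA Hrel; split; first exact: (quasi_definite_perturbedP Hu HP HT HA Hrel).
move=> Hq Q HQ; have [Q0 Q1] := SMOP_low Hq HQ.
by split => // -[|[|m]] // _; apply: (Q_high Hu HP HT HA Hrel).
Qed.
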